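(* Let $N\ge3$, $\mu\ge0$, assume (K0) and (F0), and let $p>p_S(\alpha)$. Let $t_1\in\mathbb{R}$ and let $w\in C^2(-\infty,t_1)$ be a positive solution of $$w''+aw'-A^{p-1}w+L(t)w^p+\mu g(t)=0\quad (t<t_1)$$ satisfying $0<\limsup_{t\to-\infty}w(t)<\infty$. Then $\lim_{t\to-\infty}w(t)=\gamma$.
   Context: (K0): $K:(0,\infty)\to(0,\infty)$ is continuous and $K(r)=(k_0+o(1))r^{\alpha}$ as $r\to0$ for some $\alpha>-2$, $k_0>0$. (F0): $f:(0,\infty)\to[0,\infty)$ is continuous, not identically zero, and $f(r)=O(r^{\nu})$ as $r\to0$ for some $\nu>-2$. $p_S(\alpha)=\frac{N+2+2\alpha}{N-2}$, $\theta:=\frac{2+\alpha}{p-1}$, $a:=N-2-2\theta$, $c:=N-2-\theta$, $A:=(\theta c)^{1/(p-1)}$, $\gamma:=k_0^{-1/(p-1)}A$, $L(t):=e^{-\alpha t}K(e^t)$, $g(t):=e^{(2+\theta)t}f(e^t)$. (This equation is what $w(t)=e^{\theta t}u(e^t)$ satisfies when $u$ solves $u''+\frac{N-1}{r}u'+K(r)u^p+\mu f(r)=0$.) *)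

From Stdlib Require Import Reals.
From Coquelicot Require Import Coquelicot.
Open Scope R_scope.

Definition pS (N : nat) (alpha : R) : R := (INR N + 2 + 2 * alpha) / (INR N - 2).
Definition theta (alpha p : R) : R := (2 + alpha) / (p - 1).
Definition acoef (N : nat) (alpha p : R) : R := INR N - 2 - 2 * theta alpha p.
Definition ccoef (N : nat) (alpha p : R) : R := INR N - 2 - theta alpha p.
Definition Acoef (N : nat) (alpha p : R) : R :=
  Rpower (theta alpha p * ccoef N alpha p) (1 / (p - 1)).
Definition gammacoef (N : nat) (alpha p k0 : R) : R :=
  Rpower k0 (- (1 / (p - 1))) * Acoef N alpha p.
Definition Lfun (K : R -> R) (alpha : R) (t : R) : R := exp (- alpha * t) * K (exp t).
Definition gfun (f : R -> R) (alpha p : R) (t : R) : R :=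
  exp ((2 + theta alpha p) * t) * f (exp t).

Definition limsup_minfty (w : R -> R) (t1 : R) : Rbar :=
  Glb_Rbar (fun y => exists T, T < t1 /\
              y = Lub_Rbar (fun z => exists t, t < T /\ z = w t)).

From Stdlib Require Import Reals Lra Psatz Classical.
From Coquelicot Require Import Coquelicot.
Open Scope R_scope.

(* With V(x) = - b x^2/2 + k x^(p+1)/(p+1), b = A^(p-1), the equation reads
   w'' = - a w' - V'(w) + eps(t), where a > 0 and eps(t) -> 0 as t -> -oo
   (eps collects L(t) - k0 and the forcing term); the equilibria are 0 and gamma.
   For a small beta > 0 the perturbed energy F = w'^2/2 + V(w) + beta w' V'(w)
   satisfies F' <= - c (w'^2 + V'(w)^2) + |eps| (|w'| + |V'(w)|), so F strictly
   decreases whenever (w', V'(w)) is not small.  As w, hence w' and F, are bounded,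
   F oscillates less and less at -oo, near V(0) = 0 or near V(gamma).  Each passage
   of w through a band [l, u] avoiding 0 and gamma costs F a fixed amount, so w
   eventually stays on one side of every such band and cannot stay inside one.
   The positive limsup keeps w away from 0, hence w -> gamma. *)

(** * Comparison lemmas on half-lines *)

Lemma Rmin_pos_le x y : 0 < x -> 0 < y -> 0 < Rmin x y /\ Rmin x y <= x /\ Rmin x y <= y.
Proof. intros Hx Hy. split; [apply Rmin_glb_lt; lra | split; [apply Rmin_l | apply Rmin_r]]. Qed.

Lemma derive_nonpos_le (f df : R -> R) s t : s <= t ->
  (forall x, s <= x <= t -> is_derive f x (df x)) ->
  (forall x, s <= x <= t -> df x <= 0) -> f t <= f s.
Proof.
  intros Hst Hd Hn.
  destruct (MVT_gen f s t df) as [c [Hc Heq]].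
  - intros x Hx. rewrite Rmin_left, Rmax_right in Hx by lra. apply Hd; lra.
  - intros x Hx. rewrite Rmin_left, Rmax_right in Hx by lra.
    apply continuity_pt_filterlim, (ex_derive_continuous f x).
    exists (df x). apply Hd; lra.
  - rewrite Rmin_left, Rmax_right in Hc by lra.
    assert (df c * (t - s) <= 0) by (apply Rmult_le_0_r; [apply Hn|]; lra).
    lra.
Qed.

Lemma derive_le_neg_decrease (F dF : R -> R) k s t : s <= t ->
  (forall x, s <= x <= t -> is_derive F x (dF x)) ->
  (forall x, s <= x <= t -> dF x <= - k) ->
  F t + k * (t - s) <= F s.
Proof.
  intros Hst Hd Hn.
  enough (F t + k * t <= F s + k * s) by lra.
  apply (derive_nonpos_le (fun x => F x + k * x) (fun x => dF x + k * 1)); [exact Hst| |].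
  - intros x Hx. apply (is_derive_plus F (fun x => k * x)); [apply Hd; lra|].
    apply (is_derive_scal (fun x => x)). exact (@is_derive_id R_AbsRing x).
  - intros x Hx. specialize (Hn x Hx). lra.
Qed.

Lemma derive_le_neg_not_bounded (F dF : R -> R) T k C : 0 < k ->
  (forall t, t <= T -> is_derive F t (dF t)) ->
  (forall t, t <= T -> dF t <= - k) ->
  ~ (forall t, t <= T -> Rabs (F t) <= C).
Proof.
  intros Hk Hd Hn HB.
  assert (HC : 0 <= C) by (pose proof (Rabs_pos (F T)); specialize (HB T); lra).
  set (s := T - (2 * C + 1) / k).
  assert (Hks : k * (T - s) = 2 * C + 1) by (unfold s; field; lra).
  assert (Hs : s <= T) by (enough (0 < (2 * C + 1) / k) by (unfold s; lra);
                          apply Rdiv_lt_0_compat; lra).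
  assert (F T + k * (T - s) <= F s).
  { apply (derive_le_neg_decrease F dF k s T Hs); intros x Hx; [apply Hd | apply Hn]; lra. }
  pose proof (HB T ltac:(lra)) as HT. pose proof (HB s Hs) as Hs'.
  apply Rabs_le_between in HT. apply Rabs_le_between in Hs'. lra.
Qed.

Lemma derive_le_of_damped (w w1 w2 : R -> R) a H M T : 0 < a -> 0 <= H ->
  (forall t, t <= T -> is_derive w t (w1 t)) ->
  (forall t, t <= T -> is_derive w1 t (w2 t)) ->
  (forall t, t <= T -> Rabs (w t) <= M) ->
  (forall t, t <= T -> w2 t + a * w1 t <= H) ->
  forall t, t <= T -> w1 t <= H / a.
Proof.
  intros Ha HH0 Hw Hw1 HM HH t0 Ht0. apply Rnot_lt_le. intros Hc.
  set (c := w1 t0 - H / a).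
  assert (Hc0 : 0 < c) by (unfold c; lra).
  assert (HHa : 0 <= H / a) by (apply Rdiv_le_0_compat; lra).
  (* [exp (a x) * (w1 x - H / a)] is nonincreasing, so [w1 - H / a] stays above [c] in the past. *)
  assert (Hlow : forall x, x <= t0 -> c <= w1 x).
  { intros x Hx.
    assert (exp (a * t0) * c <= exp (a * x) * (w1 x - H / a)).
    { apply (derive_nonpos_le (fun y => exp (a * y) * (w1 y - H / a))
                              (fun y => exp (a * y) * (w2 y + a * w1 y - H))); [exact Hx| |].
      - intros y Hy. auto_derive; [exists (w2 y); apply Hw1; lra|].
        rewrite (is_derive_unique (fun z : R => w1 z) y (w2 y)) by (apply Hw1; lra). field. lra.
      - intros y Hy. pose proof (exp_pos (a * y)). specialize (HH y ltac:(lra)). nra. }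
    assert (exp (a * x) <= exp (a * t0)).
    { destruct (Rle_lt_or_eq_dec _ _ Hx) as [h | ->]; [left; apply exp_increasing; nra | lra]. }
    pose proof (exp_pos (a * x)). nra. }
  apply (derive_le_neg_not_bounded (fun x => - w x) (fun x => - w1 x) t0 c M).
  - exact Hc0.
  - intros t Ht. apply (is_derive_opp w). apply Hw. lra.
  - intros t Ht. specialize (Hlow t Ht). lra.
  - intros t Ht. rewrite Rabs_Ropp. apply HM. lra.
Qed.

Lemma derive_bounded_of_damped (w w1 w2 : R -> R) a H M T : 0 < a -> 0 <= H ->
  (forall t, t <= T -> is_derive w t (w1 t)) ->
  (forall t, t <= T -> is_derive w1 t (w2 t)) ->
  (forall t, t <= T -> Rabs (w t) <= M) ->
  (forall t, t <= T -> Rabs (w2 t + a * w1 t) <= H) ->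
  forall t, t <= T -> Rabs (w1 t) <= H / a.
Proof.
  intros Ha HH0 Hw Hw1 HM HH t Ht. apply Rabs_le. split.
  - enough (- w1 t <= H / a) by lra.
    apply (derive_le_of_damped (fun x => - w x) (fun x => - w1 x) (fun x => - w2 x) a H M T Ha HH0);
      [intros; apply (is_derive_opp w); auto | intros; apply (is_derive_opp w1); auto
      | intros; rewrite Rabs_Ropp; auto | | exact Ht].
    intros x Hx. specialize (HH x Hx). apply Rabs_le_between in HH. lra.
  - apply (derive_le_of_damped w w1 w2 a H M T Ha HH0 Hw Hw1 HM); [|exact Ht].
    intros x Hx. specialize (HH x Hx). apply Rabs_le_between in HH. lra.
Qed.

Lemma continuous_eps_delta (f : R -> R) x : continuous f x ->
  forall eps, 0 < eps -> exists d, 0 < d /\ forall y, Rabs (y - x) < d -> Rabs (f y - f x) < eps.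
Proof.
  intros Hc eps Heps.
  apply continuity_pt_filterlim in Hc.
  destruct (proj1 (continuity_pt_locally f x) Hc (mkposreal eps Heps)) as [d Hd].
  exists d. split; [apply cond_pos | intros y Hy; apply (Hd y Hy)].
Qed.

Lemma first_crossing (f : R -> R) u v B : u <= v ->
  (forall x, u <= x <= v -> continuous f x) -> f u < B -> B <= f v ->
  exists t, u < t <= v /\ f t = B /\ forall x, u <= x < t -> f x < B.
Proof.
  intros Huv Hc Hu Hv.
  set (E := fun x => u <= x <= v /\ forall y, u <= y <= x -> f y < B).
  assert (HEu : E u) by (split; [lra | intros y Hy; replace y with u by lra; exact Hu]).
  destruct (completeness E) as [m [Hub Hlub]];
    [exists v; intros x [Hx _]; lra | exists u; exact HEu |].
  assert (Hum : u <= m) by (apply Hub; exact HEu).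
  assert (Hmv : m <= v) by (apply Hlub; intros x [Hx _]; lra).
  assert (Hbelow : forall x, u <= x < m -> f x < B).
  { intros x Hx. apply NNPP. intros Hn.
    enough (m <= x) by lra.
    apply Hlub. intros e [He1 He2].
    apply Rnot_lt_le. intros Hxe. apply Hn, He2. lra. }
  assert (Hright : forall x, u <= x < v -> f x < B -> (forall y, u <= y < x -> f y < B) -> x < m).
  { intros x Hx Hfx Hbx.
    destruct (continuous_eps_delta f x (Hc x ltac:(lra)) (B - f x) ltac:(lra)) as [d [Hd Hd']].
    set (x' := Rmin (x + d / 2) v).
    assert (Hxx' : x < x') by (apply Rmin_glb_lt; lra).
    assert (Hx'd : x' <= x + d / 2) by apply Rmin_l.
    enough (x' <= m) by lra.
    apply Hub. split; [split; [lra | apply Rmin_r]|].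
    intros y Hy. destruct (Rlt_or_le y x) as [h | h]; [apply Hbx; lra|].
    assert (Hyx : Rabs (y - x) < d) by (rewrite Rabs_right; lra).
    specialize (Hd' y Hyx). apply Rabs_lt_between in Hd'. lra. }
  assert (Hm : u < m).
  { assert (u < v) by (destruct (Rle_lt_or_eq_dec u v Huv) as [h | <-]; lra).
    apply (Hright u); [lra | exact Hu | intros y Hy; lra]. }
  exists m. split; [lra|]. split; [|exact Hbelow].
  destruct (Rtotal_order (f m) B) as [Hlt | [Heq | Hgt]]; [| exact Heq |].
  - exfalso.
    destruct (Rle_lt_or_eq_dec m v Hmv) as [h | h]; [|subst; lra].
    pose proof (Hright m ltac:(lra) Hlt Hbelow). lra.
  - exfalso.
    destruct (continuous_eps_delta f m (Hc m ltac:(lra)) (f m - B) ltac:(lra)) as [d [Hd Hd']].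
    set (y := Rmax u (m - d / 2)).
    assert (Hy : u <= y < m) by (split; [apply Rmax_l | apply Rmax_lub_lt; lra]).
    assert (m - d / 2 <= y) by apply Rmax_r.
    assert (Hym : Rabs (y - m) < d) by (rewrite Rabs_left; lra).
    specialize (Hd' y Hym). apply Rabs_lt_between in Hd'.
    specialize (Hbelow y Hy). lra.
Qed.

Lemma crossing_interval (f : R -> R) u v A B : u <= v -> A < B ->
  (forall x, u <= x <= v -> continuous f x) -> f u <= A -> B <= f v ->
  exists s t, u <= s < t /\ t <= v /\ f s = A /\ f t = B /\
    forall x, s <= x <= t -> A <= f x <= B.
Proof.
  intros Huv HAB Hc Hu Hv.
  destruct (first_crossing f u v B Huv Hc ltac:(lra) Hv) as [t [Ht [HtB Hbelow]]].
  (* The last time [f] equals [A] before [t] is a first crossing for the reflected function. *)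
  set (g := fun x => - f (- x)).
  destruct (first_crossing g (- t) (- u) (- A)) as [x [Hx [HxA Habove]]].
  - lra.
  - intros x Hx. unfold g.
    apply continuity_pt_filterlim, continuity_pt_opp.
    apply (continuity_pt_comp (fun x => - x) f).
    + apply continuity_pt_opp, derivable_continuous_pt, derivable_pt_id.
    + apply continuity_pt_filterlim, Hc. lra.
  - unfold g. rewrite Ropp_involutive. lra.
  - unfold g. rewrite Ropp_involutive. lra.
  - unfold g in HxA, Habove.
    exists (- x), t.
    do 4 (split; [lra|]). intros y Hy. split.
    + destruct (Rle_lt_or_eq_dec (- x) y ltac:(lra)) as [h | <-]; [|lra].
      specialize (Habove (- y) ltac:(lra)). rewrite Ropp_involutive in Habove. lra.
    + destruct (Rle_lt_or_eq_dec y t ltac:(lra)) as [h | ->]; [|lra].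
      specialize (Hbelow y ltac:(lra)). lra.
Qed.

Lemma no_upcrossing (F dF : R -> R) T c1 c2 : c1 < c2 ->
  (forall t, t <= T -> is_derive F t (dF t)) ->
  (forall t, t <= T -> c1 <= F t <= c2 -> dF t <= 0) ->
  forall s t, s <= t <= T -> F s < c2 -> F t < c2.
Proof.
  intros Hc Hd Hn s t Hst Hs. apply Rnot_le_lt. intros Ht.
  assert (HA : Rmax (F s) c1 < c2) by (apply Rmax_lub_lt; lra).
  destruct (crossing_interval F s t (Rmax (F s) c1) c2)
    as (s' & t' & Hs't' & Ht' & HFs & HFt & Hin);
    [lra | exact HA | | apply Rmax_l | exact Ht |].
  - intros x Hx. apply (ex_derive_continuous F). exists (dF x). apply Hd. lra.
  - assert (F t' <= F s'); [|lra].
    apply (derive_nonpos_le F dF); [lra | intros x Hx; apply Hd; lra |].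
    intros x Hx. specialize (Hin x Hx). pose proof (Rmax_r (F s) c1).
    apply Hn; lra.
Qed.

Lemma le_of_derive_neg_band (F dF : R -> R) T C k c d : 0 < k ->
  (forall t, t <= T -> is_derive F t (dF t)) ->
  (forall t, t <= T -> Rabs (F t) <= C) ->
  (forall t, t <= T -> c <= F t <= d -> dF t <= - k) ->
  (forall t, t <= T -> F t <= d) ->
  forall t, t <= T -> F t <= c.
Proof.
  intros Hk Hd HB Hn Hle t0 Ht0. apply Rnot_lt_le. intros Hc.
  assert (Hpast : forall t, t <= t0 -> F t0 <= F t).
  { intros t Ht. apply Rnot_lt_le. intros Hlt.
    enough (F t0 < F t0) by lra.
    apply (no_upcrossing F dF T c (F t0) Hc Hd) with t; [| lra | exact Hlt].
    intros x Hx Hb. enough (dF x <= - k) by lra.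
    apply Hn; [exact Hx|]. specialize (Hle t0 Ht0). lra. }
  apply (derive_le_neg_not_bounded F dF t0 k C Hk); intros t Ht.
  - apply Hd. lra.
  - apply Hn; [lra|]. split; [specialize (Hpast t Ht); lra | apply Hle; lra].
  - apply HB. lra.
Qed.

Lemma ge_of_derive_neg_below (F dF : R -> R) T C k c : 0 < k ->
  (forall t, t <= T -> is_derive F t (dF t)) ->
  (forall t, t <= T -> Rabs (F t) <= C) ->
  (forall t, t <= T -> F t <= c -> dF t <= - k) ->
  forall t, t <= T - (2 * C + 1) / k -> c <= F t.
Proof.
  intros Hk Hd HB Hn t0 Ht0. apply Rnot_lt_le. intros Hc.
  assert (HC : 0 <= C) by (pose proof (Rabs_pos (F T)); specialize (HB T); lra).
  assert (Hq : 0 < (2 * C + 1) / k) by (apply Rdiv_lt_0_compat; lra).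
  assert (Hlong : 2 * C + 1 <= k * (T - t0)).
  { replace (2 * C + 1) with (k * ((2 * C + 1) / k)) by (field; lra).
    apply Rmult_le_compat_l; lra. }
  (* Once below [c], [F] stays below [c], hence keeps decreasing at rate [k] up to [T]. *)
  assert (Hfut : forall t, t0 <= t <= T -> F t < c).
  { intros t Ht.
    apply (no_upcrossing F dF T (F t0 - 1) c) with t0; [lra | exact Hd | | lra | exact Hc].
    intros x Hx Hb. specialize (Hn x Hx ltac:(lra)). lra. }
  assert (F T + k * (T - t0) <= F t0).
  { apply (derive_le_neg_decrease F dF k t0 T); [lra | intros x Hx; apply Hd; lra |].
    intros x Hx. apply Hn; [lra|]. left. apply Hfut. exact Hx. }
  pose proof (HB T ltac:(lra)) as HT. pose proof (HB t0 ltac:(lra)) as Ht.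
  apply Rabs_le_between in HT. apply Rabs_le_between in Ht. lra.
Qed.

Definition cauchy_minfty (F : R -> R) :=
  forall eta, 0 < eta -> exists T, forall s t, s <= T -> t <= T -> Rabs (F s - F t) <= eta.

Lemma Rbar_locally_minfty_le (P : R -> Prop) :
  Rbar_locally m_infty P -> exists T, forall t, t <= T -> P t.
Proof. intros [M HM]. exists (M - 1). intros t Ht. apply HM. lra. Qed.

Lemma Rbar_locally_minfty_le_const T : Rbar_locally m_infty (fun t => t <= T).
Proof. exists T. intros t Ht. lra. Qed.

Lemma not_Rbar_locally_minfty (P : R -> Prop) :
  ~ Rbar_locally m_infty P -> forall T, exists t, t <= T /\ ~ P t.
Proof.
  intros Hn T. apply NNPP. intros Hex. apply Hn. exists T.
  intros t Ht. apply NNPP. intros HP. apply Hex. exists t. split; [lra | exact HP].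
Qed.

Lemma eventually_near_two_levels (F dF : R -> R) T C k Z eta : 0 < k -> Z + eta < - eta ->
  (forall t, t <= T -> is_derive F t (dF t)) ->
  (forall t, t <= T -> Rabs (F t) <= C) ->
  (forall t, t <= T ->
     eta <= F t \/ F t <= Z - eta \/ Z + eta <= F t <= - eta -> dF t <= - k) ->
  exists T', (forall t, t <= T' -> - eta <= F t <= eta)
          \/ (forall t, t <= T' -> Z - eta <= F t <= Z + eta).
Proof.
  intros Hk HZ Hd HB Hn.
  assert (HC : 0 <= C) by (pose proof (Rabs_pos (F T)); specialize (HB T); lra).
  assert (Htop : forall t, t <= T -> F t <= eta).
  { apply (le_of_derive_neg_band F dF T C k eta C Hk Hd HB).
    - intros t Ht Hb. apply Hn; [exact Ht | left; lra].
    - intros t Ht. specialize (HB t Ht). apply Rabs_le_between in HB. lra. }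
  set (T2 := T - (2 * C + 1) / k).
  assert (HT2 : T2 <= T).
  { enough (0 <= (2 * C + 1) / k) by (unfold T2; lra). apply Rdiv_le_0_compat; lra. }
  assert (Hbot : forall t, t <= T2 -> Z - eta <= F t).
  { apply (ge_of_derive_neg_below F dF T C k (Z - eta) Hk Hd HB).
    intros t Ht Hb. apply Hn; [exact Ht | right; left; lra]. }
  destruct (classic (Rbar_locally m_infty (fun t => - eta <= F t))) as [Hup | Hlow].
  - destruct (Rbar_locally_minfty_le _ Hup) as [T3 HT3].
    exists (Rmin T3 T). left. intros t Ht.
    pose proof (Rmin_l T3 T). pose proof (Rmin_r T3 T).
    split; [apply HT3 | apply Htop]; lra.
  - (* Once below [-eta], [F] cannot climb back through [Z + eta, -eta]. *)
    assert (Hneg : forall t, t <= T -> F t < - eta).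
    { intros t Ht. destruct (not_Rbar_locally_minfty _ Hlow t) as [t0 [Ht0 HFt0]].
      apply (no_upcrossing F dF T (Z + eta) (- eta)) with t0; [lra | exact Hd | | lra | lra].
      intros x Hx Hb. enough (dF x <= - k) by lra. apply Hn; [exact Hx | right; right; lra]. }
    assert (Hnear : forall t, t <= T -> F t <= Z + eta).
    { apply (le_of_derive_neg_band F dF T C k (Z + eta) (- eta) Hk Hd HB).
      - intros t Ht Hb. apply Hn; [exact Ht | right; right; lra].
      - intros t Ht. left. apply Hneg. exact Ht. }
    exists T2. right. intros t Ht. split; [apply Hbot | apply Hnear]; lra.
Qed.

Lemma cauchy_minfty_of_derive_neg (F dF : R -> R) T C Z : Z < 0 ->
  (forall t, t <= T -> is_derive F t (dF t)) ->
  (forall t, t <= T -> Rabs (F t) <= C) ->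
  (forall eta, 0 < eta -> exists k, 0 < k /\ Rbar_locally m_infty (fun t =>
     eta <= Rabs (F t) -> eta <= Rabs (F t - Z) -> dF t <= - k)) ->
  cauchy_minfty F.
Proof.
  intros HZ Hd HB Hdec eta0 Heta0.
  destruct (Rmin_pos_le (eta0 / 2) (- Z / 4)) as (Heta & He1 & He2); [lra | lra |].
  set (eta := Rmin (eta0 / 2) (- Z / 4)) in *.
  destruct (Hdec eta Heta) as [k [Hk Hev]].
  destruct (Rbar_locally_minfty_le _ Hev) as [T' HT'].
  set (T1 := Rmin T T').
  assert (HT1 : T1 <= T /\ T1 <= T') by (split; [apply Rmin_l | apply Rmin_r]).
  destruct (eventually_near_two_levels F dF T1 C k Z eta Hk) as [T2 Hw].
  - lra.
  - intros t Ht. apply Hd. lra.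
  - intros t Ht. apply HB. lra.
  - intros t Ht Hr. apply HT'; [lra | |];
      destruct Hr as [h | [h | h]];
      first [rewrite Rabs_right by lra | rewrite Rabs_left by lra]; lra.
  - exists T2. intros s t Hs Ht.
    destruct Hw as [Hw | Hw]; pose proof (Hw s Hs); pose proof (Hw t Ht); apply Rabs_le; lra.
Qed.

Lemma band_crossing_decrease (F dF w w1 : R -> R) k l u s t : 0 <= k -> l < u -> s <= t ->
  (forall x, s <= x <= t -> is_derive F x (dF x) /\ is_derive w x (w1 x)) ->
  (forall x, s <= x <= t -> l <= w x <= u -> dF x <= - k * Rabs (w1 x)) ->
  w s <= l -> u <= w t ->
  exists s' t', s <= s' <= t /\ s <= t' <= t /\ F t' + k * (u - l) <= F s'.
Proof.
  intros Hk Hlu Hst Hd Hn Hs Ht.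
  destruct (crossing_interval w s t l u Hst Hlu) as (s' & t' & Hs't' & Ht' & Hws & Hwt & Hin);
    [| exact Hs | exact Ht |].
  - intros x Hx. apply (ex_derive_continuous w). exists (w1 x). apply Hd. exact Hx.
  - exists s', t'. split; [lra|]. split; [lra|].
    assert (Hmono : F t' + k * w t' <= F s' + k * w s'); [|rewrite Hws, Hwt in Hmono; lra].
    apply (derive_nonpos_le (fun x => F x + k * w x) (fun x => dF x + k * w1 x)); [lra| |].
    + intros x Hx. destruct (Hd x ltac:(lra)) as [HF Hw].
      apply (is_derive_plus F (fun x => k * w x)); [exact HF | apply (is_derive_scal w); exact Hw].
    + intros x Hx. specialize (Hn x ltac:(lra) (Hin x Hx)).
      pose proof (Rle_abs (w1 x)). nra.
Qed.

Lemma eventually_one_side_of_band (F dF w w1 : R -> R) T k l u : 0 < k -> l < u ->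
  (forall t, t <= T -> is_derive F t (dF t) /\ is_derive w t (w1 t)) ->
  Rbar_locally m_infty (fun t => l <= w t <= u -> dF t <= - k * Rabs (w1 t)) ->
  cauchy_minfty F ->
  Rbar_locally m_infty (fun t => l < w t) \/ Rbar_locally m_infty (fun t => w t < u).
Proof.
  intros Hk Hlu Hd Hev HF.
  apply NNPP. intros Hn. apply not_or_and in Hn. destruct Hn as [Hl Hu].
  destruct (HF (k * (u - l) / 2)) as [T1 HT1]; [apply Rdiv_lt_0_compat; nra|].
  destruct (Rbar_locally_minfty_le _ Hev) as [T2 HT2].
  set (T3 := Rmin T (Rmin T1 T2)).
  assert (HT3 : T3 <= T /\ T3 <= T1 /\ T3 <= T2).
  { unfold T3. pose proof (Rmin_l T (Rmin T1 T2)). pose proof (Rmin_r T (Rmin T1 T2)).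
    pose proof (Rmin_l T1 T2). pose proof (Rmin_r T1 T2). lra. }
  destruct (not_Rbar_locally_minfty _ Hl T3) as [ta [Hta Hwa]].
  destruct (not_Rbar_locally_minfty _ Hu T3) as [tb [Htb Hwb]].
  (* Every passage through the band costs [F] at least [k (u - l)], more than its oscillation. *)
  assert (Hcross : exists s t, s <= T3 /\ t <= T3 /\ F t + k * (u - l) <= F s).
  { destruct (Rle_or_lt ta tb) as [Hab | Hab].
    - destruct (band_crossing_decrease F dF w w1 k l u ta tb) as (s & t & Hs & Ht & Hdrop);
        [lra | lra | lra | intros x Hx; apply Hd; lra | | lra | lra |].
      + intros x Hx. apply HT2. lra.
      + exists s, t. repeat split; lra.
    - destruct (band_crossing_decrease F dF (fun x => - w x) (fun x => - w1 x) k (- u) (- l) tb ta)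
        as (s & t & Hs & Ht & Hdrop); [lra | lra | lra | | | lra | lra |].
      + intros x Hx. destruct (Hd x ltac:(lra)) as [HF' Hw].
        split; [exact HF' | apply (is_derive_opp w); exact Hw].
      + intros x Hx Hb. rewrite Rabs_Ropp. apply HT2; lra.
      + exists s, t. repeat split; lra. }
  destruct Hcross as (s & t & Hs & Ht & Hdrop).
  specialize (HT1 s t ltac:(lra) ltac:(lra)). apply Rabs_le_between in HT1. nra.
Qed.

(** * The potential and the perturbed energy *)

Lemma Rpower_pos x e : 0 < Rpower x e.
Proof. apply exp_pos. Qed.

Lemma Rpower_succ x e : 0 < x -> Rpower x (e + 1) = x * Rpower x e.
Proof. intros Hx. rewrite Rpower_plus, Rpower_1 by exact Hx. ring. Qed.

Lemma is_derive_Rpower x e : 0 < x -> is_derive (fun y => Rpower y e) x (e * Rpower x (e - 1)).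
Proof. intros Hx. apply is_derive_Reals, derivable_pt_lim_power, Hx. Qed.

Definition pot (b k p x : R) := - b * x ^ 2 / 2 + k / (p + 1) * Rpower x (p + 1).
Definition dpot (b k p x : R) := - b * x + k * Rpower x p.
Definition d2pot (b k p x : R) := - b + k * p * Rpower x (p - 1).

Lemma is_derive_pot b k p x : 0 < x -> p + 1 <> 0 -> is_derive (pot b k p) x (dpot b k p x).
Proof.
  intros Hx Hp. unfold pot, dpot. auto_derive; [eexists; apply is_derive_Rpower, Hx|].
  rewrite (is_derive_unique (fun y : R => Rpower y (p + 1)) x _ (is_derive_Rpower x (p + 1) Hx)).
  replace (p + 1 - 1) with p by ring. field. exact Hp.
Qed.

Lemma is_derive_dpot b k p x : 0 < x -> is_derive (dpot b k p) x (d2pot b k p x).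
Proof.
  intros Hx. unfold dpot, d2pot. auto_derive; [eexists; apply is_derive_Rpower, Hx|].
  rewrite (is_derive_unique (fun y : R => Rpower y p) x _ (is_derive_Rpower x p Hx)). ring.
Qed.

Section PotentialBounds.

Variables (b k p : R).
Hypotheses (Hb : 0 <= b) (Hk : 0 <= k) (Hp : 1 < p).

Lemma Rabs_dpot_le M x : 0 < x <= M -> Rabs (dpot b k p x) <= b * M + k * Rpower M p.
Proof.
  intros Hx. unfold dpot.
  assert (Rpower x p <= Rpower M p) by (apply Rle_Rpower_l; lra).
  pose proof (Rpower_pos x p).
  apply Rabs_le. split; nra.
Qed.

Lemma Rabs_pot_le M x : 0 < x <= M -> Rabs (pot b k p x) <= b * M ^ 2 + k * Rpower M (p + 1).
Proof.
  intros Hx. unfold pot.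
  assert (Rpower x (p + 1) <= Rpower M (p + 1)) by (apply Rle_Rpower_l; lra).
  pose proof (Rpower_pos x (p + 1)).
  assert (x ^ 2 <= M ^ 2) by (apply pow_incr; lra).
  assert (Hkp : 0 <= k / (p + 1) <= k).
  { split; [apply Rdiv_le_0_compat; lra|].
    apply Rmult_le_reg_r with (p + 1); [lra|]. field_simplify; nra. }
  assert (0 <= k / (p + 1) * Rpower x (p + 1) <= k * Rpower M (p + 1)) by (split; nra).
  apply Rabs_le. split; nra.
Qed.

Lemma d2pot_le M x : 0 < x <= M -> d2pot b k p x <= k * p * Rpower M (p - 1).
Proof.
  intros Hx. unfold d2pot.
  assert (Rpower x (p - 1) <= Rpower M (p - 1)) by (apply Rle_Rpower_l; lra).
  assert (0 <= k * p) by nra. nra.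
Qed.

Lemma Rabs_pot_le_lin x : 0 < x <= 1 -> Rabs (pot b k p x) <= (b + k) * x.
Proof.
  intros Hx. unfold pot. rewrite Rpower_succ by lra.
  assert (Rpower x p <= x).
  { replace p with ((p - 1) + 1) by ring. rewrite Rpower_succ by lra.
    assert (Rpower x (p - 1) <= 1).
    { replace 1 with (Rpower 1 (p - 1)) at 2
        by (unfold Rpower; rewrite ln_1, Rmult_0_r; apply exp_0).
      apply Rle_Rpower_l; lra. }
    pose proof (Rpower_pos x (p - 1)). nra. }
  pose proof (Rpower_pos x p).
  assert (Hkp : 0 <= k / (p + 1) <= k).
  { split; [apply Rdiv_le_0_compat; lra|].
    apply Rmult_le_reg_r with (p + 1); [lra|]. field_simplify; nra. }
  assert (Hxp : 0 <= x * Rpower x p <= x) by (split; nra).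
  assert (0 <= k / (p + 1) * (x * Rpower x p) <= k * x)
    by (split; [apply Rmult_le_pos | apply Rmult_le_compat]; lra).
  assert (x ^ 2 <= x) by nra.
  assert (0 <= b * x ^ 2 / 2 <= b * x) by (split; nra).
  apply Rabs_le. split; lra.
Qed.

End PotentialBounds.

(* The left-hand side is the derivative of [lyap b k p beta w' w] along
   [w'' = - a w' - V'(w) + e], written with [X = w'], [Y = V'(w)] and [Q = V''(w)]. *)
Lemma lyap_dissipation a beta D Q X Y e : 0 < a -> 0 <= D -> Q <= D -> 0 <= beta ->
  beta * (2 * D + a ^ 2 + 1) <= a ->
  X * (- a * X - Y + e) + Y * X + beta * ((- a * X - Y + e) * Y + Q * X ^ 2)
  <= - (beta / 2) * (X ^ 2 + Y ^ 2) + Rabs e * (Rabs X + Rabs Y).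
Proof.
  intros Ha HD HQ Hb Hba.
  assert (Hb1 : beta <= 1).
  { assert (beta * (a ^ 2 + 1) <= a) by nra.
    assert (0 <= (a - 1) ^ 2) by apply pow2_ge_0. nra. }
  assert (h1 : beta * Q * X ^ 2 <= beta * D * X ^ 2) by (apply Rmult_le_compat_r; nra).
  assert (h2 : e * X <= Rabs e * Rabs X) by (rewrite <- Rabs_mult; apply Rle_abs).
  assert (h3 : beta * (e * Y) <= Rabs e * Rabs Y).
  { assert (e * Y <= Rabs e * Rabs Y) by (rewrite <- Rabs_mult; apply Rle_abs).
    pose proof (Rabs_pos e). pose proof (Rabs_pos Y).
    destruct (Rle_or_lt 0 (e * Y)); nra. }
  (* Young's inequality on the cross term [a beta X Y]. *)
  assert (h4 : - (a * beta * X * Y) <= beta / 2 * Y ^ 2 + a ^ 2 * beta / 2 * X ^ 2).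
  { assert (0 <= beta / 2 * (Y + a * X) ^ 2) by (apply Rmult_le_pos; [lra | apply pow2_ge_0]).
    nra. }
  assert (h5 : (- a + beta * D + a ^ 2 * beta / 2) * X ^ 2 <= - (beta / 2) * X ^ 2).
  { apply Rmult_le_compat_r; [apply pow2_ge_0 | nra]. }
  nra.
Qed.

Lemma quadratic_absorbs_linear beta X Y e S0 : 0 < beta -> 0 < S0 ->
  Rabs e <= beta * S0 / 8 -> S0 <= Rabs X + Rabs Y ->
  - (beta / 2) * (X ^ 2 + Y ^ 2) + Rabs e * (Rabs X + Rabs Y)
  <= - (beta / 8) * S0 * (Rabs X + Rabs Y).
Proof.
  intros Hb HS He HS0.
  set (S := Rabs X + Rabs Y) in *.
  assert (h1 : S ^ 2 <= 2 * (X ^ 2 + Y ^ 2)).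
  { unfold S. rewrite <- (pow2_abs X), <- (pow2_abs Y).
    assert (0 <= (Rabs X - Rabs Y) ^ 2) by apply pow2_ge_0. nra. }
  assert (h2 : Rabs e * S <= beta * S0 / 8 * S) by (apply Rmult_le_compat_r; lra).
  assert (h3 : 0 <= beta / 8 * S * (S - S0)) by (apply Rmult_le_pos; [apply Rmult_le_pos|]; lra).
  nra.
Qed.

Definition lyap (b k p beta X x : R) := X ^ 2 / 2 + pot b k p x + beta * X * dpot b k p x.

(** * Convergence for the perturbed damped equation *)

Section Convergence.

Variables (a b k p gam M T0 : R) (w w1 w2 eps : R -> R).
Hypotheses (Ha : 0 < a) (Hk : 0 < k) (Hp : 1 < p) (Hgam : 0 < gam).
Hypothesis Hgam_eq : k * Rpower gam (p - 1) = b.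
Hypothesis Hw : forall t, t <= T0 -> 0 < w t <= M.
Hypothesis Hw1 : forall t, t <= T0 -> is_derive w t (w1 t).
Hypothesis Hw2 : forall t, t <= T0 -> is_derive w1 t (w2 t).
Hypothesis Hode : forall t, t <= T0 -> w2 t = - a * w1 t - dpot b k p (w t) + eps t.
Hypothesis Heps : is_lim eps m_infty 0.
Hypothesis Hfreq : exists lam, 0 < lam /\ ~ Rbar_locally m_infty (fun t => w t <= lam).

Local Notation V := (pot b k p).
Local Notation dV := (dpot b k p).

Lemma b_pos : 0 < b.
Proof. rewrite <- Hgam_eq. apply Rmult_lt_0_compat; [exact Hk | apply Rpower_pos]. Qed.

Lemma M_pos : 0 < M.
Proof. destruct (Hw T0); lra. Qed.

Lemma dV_neg_below l u : 0 < l <= u -> u < gam ->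
  exists m, 0 < m /\ forall x, l <= x <= u -> m <= - dV x.
Proof.
  intros Hlu Hu.
  assert (Rpower u (p - 1) < Rpower gam (p - 1)) by (apply Rlt_Rpower_l; lra).
  exists (l * (b - k * Rpower u (p - 1))). split; [apply Rmult_lt_0_compat; nra|].
  intros x Hx. unfold dpot.
  assert (E : Rpower x p = x * Rpower x (p - 1)) by (rewrite <- Rpower_succ by lra; f_equal; ring).
  assert (Rpower x (p - 1) <= Rpower u (p - 1)) by (apply Rle_Rpower_l; lra).
  rewrite E. apply Rle_trans with (x * (b - k * Rpower u (p - 1))); [apply Rmult_le_compat_r; nra|].
  replace (- (- b * x + k * (x * Rpower x (p - 1)))) with (x * (b - k * Rpower x (p - 1))) by ring.
  apply Rmult_le_compat_l; nra.
Qed.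

Lemma dV_pos_above l : gam < l -> exists m, 0 < m /\ forall x, l <= x -> m <= dV x.
Proof.
  intros Hl.
  assert (Rpower gam (p - 1) < Rpower l (p - 1)) by (apply Rlt_Rpower_l; lra).
  exists (l * (k * Rpower l (p - 1) - b)). split; [apply Rmult_lt_0_compat; nra|].
  intros x Hx. unfold dpot.
  assert (E : Rpower x p = x * Rpower x (p - 1)) by (rewrite <- Rpower_succ by lra; f_equal; ring).
  assert (Rpower l (p - 1) <= Rpower x (p - 1)) by (apply Rle_Rpower_l; lra).
  rewrite E. apply Rle_trans with (x * (k * Rpower l (p - 1) - b)); [apply Rmult_le_compat_r; nra|].
  replace (- b * x + k * (x * Rpower x (p - 1))) with (x * (k * Rpower x (p - 1) - b)) by ring.
  apply Rmult_le_compat_l; nra.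
Qed.

Lemma V_gam_neg : V gam < 0.
Proof.
  pose proof b_pos.
  assert (HV : V gam = gam ^ 2 * b * (/ (p + 1) - / 2)).
  { unfold pot. replace (p + 1) with ((p - 1) + 1 + 1) at 2 by ring.
    rewrite !Rpower_succ, <- Hgam_eq by lra. field. lra. }
  assert (/ (p + 1) < / 2) by (apply Rinv_lt_contravar; lra).
  assert (0 < gam ^ 2 * b) by (apply Rmult_lt_0_compat; [apply pow_lt |]; lra).
  rewrite HV. nra.
Qed.

Lemma dV_small_near_zeros rho : 0 < rho <= gam / 2 ->
  exists S, 0 < S /\ forall x, 0 < x -> Rabs (dV x) < S -> x < rho \/ Rabs (x - gam) < rho.
Proof.
  intros Hrho.
  destruct (dV_neg_below rho (gam - rho)) as [m1 [Hm1 H1]]; [lra | lra |].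
  destruct (dV_pos_above (gam + rho)) as [m2 [Hm2 H2]]; [lra |].
  exists (Rmin m1 m2). split; [apply Rmin_glb_lt; lra|].
  intros x Hx HdV. pose proof (Rmin_l m1 m2). pose proof (Rmin_r m1 m2).
  pose proof (Rle_abs (dV x)). pose proof (Rle_abs (- dV x)). rewrite Rabs_Ropp in *.
  destruct (Rlt_or_le x rho) as [h | h]; [left; exact h | right].
  apply Rabs_def1; apply Rnot_le_lt; intros h'.
  - specialize (H2 x ltac:(lra)). lra.
  - specialize (H1 x ltac:(lra)). lra.
Qed.

Lemma lyap_near_wells beta : 0 <= beta <= 1 -> forall eta, 0 < eta ->
  exists S, 0 < S /\ forall X x, 0 < x -> Rabs X + Rabs (dV x) < S ->
    Rabs (lyap b k p beta X x) < eta \/ Rabs (lyap b k p beta X x - V gam) < eta.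
Proof.
  intros Hbeta eta Heta. pose proof b_pos.
  assert (HVc : continuous V gam)
    by (apply (ex_derive_continuous V); eexists; apply is_derive_pot; lra).
  destruct (continuous_eps_delta V gam HVc (eta / 4)) as [r [Hr HVr]]; [lra|].
  assert (Hbk : 0 < eta / (4 * (b + k))) by (apply Rdiv_lt_0_compat; lra).
  destruct (Rmin_pos_le (gam / 2) 1) as (Hr1 & Hr2 & Hr3); [lra | lra |].
  destruct (Rmin_pos_le (eta / (4 * (b + k))) r) as (Hr4 & Hr5 & Hr6); [lra | lra |].
  destruct (Rmin_pos_le (Rmin (gam / 2) 1) (Rmin (eta / (4 * (b + k))) r)) as (Hr7 & Hr8 & Hr9);
    [lra | lra |].
  set (rho := Rmin (Rmin (gam / 2) 1) (Rmin (eta / (4 * (b + k))) r)) in *.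
  destruct (dV_small_near_zeros rho) as [S1 [HS1 Hzeros]]; [lra|].
  destruct (Rmin_pos_le S1 1) as (HS2 & HS3 & HS4); [lra | lra |].
  destruct (Rmin_pos_le (Rmin S1 1) (eta / 4)) as (HS5 & HS6 & HS7); [lra | lra |].
  set (S := Rmin (Rmin S1 1) (eta / 4)) in *.
  exists S. split; [lra|]. intros X x Hx HXx.
  pose proof (Rabs_pos X). pose proof (Rabs_pos (dV x)).
  assert (Hkin : Rabs (X ^ 2 / 2 + beta * X * dV x) <= 3 * eta / 8).
  { assert (HX2 : Rabs (X ^ 2 / 2) <= S * S / 2).
    { rewrite Rabs_right by (apply Rle_ge, Rmult_le_pos; [apply pow2_ge_0 | lra]).
      rewrite <- (pow2_abs X). simpl. nra. }
    assert (HXY : Rabs (beta * X * dV x) <= S * S).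
    { rewrite !Rabs_mult, (Rabs_right beta) by lra.
      assert (Rabs X * Rabs (dV x) <= S * S) by (apply Rmult_le_compat; lra).
      nra. }
    pose proof (Rabs_triang (X ^ 2 / 2) (beta * X * dV x)).
    assert (S * S <= eta / 4) by nra.
    lra. }
  unfold lyap.
  destruct (Hzeros x Hx ltac:(lra)) as [Hx0 | Hxg]; [left | right].
  - assert (Rabs (V x) <= eta / 4).
    { apply Rle_trans with ((b + k) * x); [apply Rabs_pot_le_lin; lra|].
      apply Rle_trans with ((b + k) * (eta / (4 * (b + k)))); [apply Rmult_le_compat_l; lra|].
      right. field. lra. }
    replace (X ^ 2 / 2 + V x + beta * X * dV x) with ((X ^ 2 / 2 + beta * X * dV x) + V x) by ring.
    pose proof (Rabs_triang (X ^ 2 / 2 + beta * X * dV x) (V x)). lra.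
  - specialize (HVr x ltac:(lra)).
    replace (X ^ 2 / 2 + V x + beta * X * dV x - V gam)
      with ((X ^ 2 / 2 + beta * X * dV x) + (V x - V gam)) by ring.
    pose proof (Rabs_triang (X ^ 2 / 2 + beta * X * dV x) (V x - V gam)). lra.
Qed.

Let D := k * p * Rpower M (p - 1).
Let beta := a / (2 * D + a ^ 2 + 1).
Let F t := lyap b k p beta (w1 t) (w t).
Let dF t := w1 t * w2 t + dV (w t) * w1 t + beta * (w2 t * dV (w t) + d2pot b k p (w t) * w1 t ^ 2).

Lemma D_nonneg : 0 <= D.
Proof. unfold D. pose proof (Rpower_pos M (p - 1)). apply Rmult_le_pos; nra. Qed.

Lemma beta_pos : 0 < beta.
Proof. pose proof D_nonneg. unfold beta. apply Rdiv_lt_0_compat; nra. Qed.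

Lemma beta_le : beta * (2 * D + a ^ 2 + 1) <= a.
Proof. pose proof D_nonneg. unfold beta. right. field. nra. Qed.

Lemma beta_le_1 : beta <= 1.
Proof.
  pose proof D_nonneg. pose proof beta_pos. pose proof beta_le.
  assert (0 <= (a - 1) ^ 2) by apply pow2_ge_0. nra.
Qed.

Lemma is_derive_F t : t <= T0 -> is_derive F t (dF t).
Proof.
  intros Ht. destruct (Hw t Ht) as [Hwt _].
  pose proof (is_derive_pot b k p (w t) Hwt ltac:(lra)) as HV.
  pose proof (is_derive_dpot b k p (w t) Hwt) as HdV.
  unfold F, dF, lyap. auto_derive.
  - repeat split; eexists; first [exact (Hw2 t Ht) | exact (Hw1 t Ht) | exact HV | exact HdV].
  - rewrite (is_derive_unique (fun y : R => w1 y) t _ (Hw2 t Ht)),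
      (is_derive_unique (fun y : R => w y) t _ (Hw1 t Ht)),
      (is_derive_unique (fun y : R => V y) _ _ HV), (is_derive_unique (fun y : R => dV y) _ _ HdV).
    field.
Qed.

Lemma dF_le t : t <= T0 ->
  dF t <= - (beta / 2) * (w1 t ^ 2 + dV (w t) ^ 2) + Rabs (eps t) * (Rabs (w1 t) + Rabs (dV (w t))).
Proof.
  intros Ht. pose proof b_pos. pose proof beta_pos.
  unfold dF. rewrite (Hode t Ht).
  apply (lyap_dissipation a beta D); [exact Ha | apply D_nonneg | | lra | apply beta_le].
  apply d2pot_le; [lra | lra | lra | apply Hw, Ht].
Qed.

Lemma eps_eventually_le d : 0 < d -> Rbar_locally m_infty (fun t => Rabs (eps t) <= d).
Proof.
  intros Hd. apply is_lim_spec in Heps.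
  apply (filter_imp (fun t => Rabs (eps t - 0) < d)); [intros t Ht; rewrite Rminus_0_r in Ht; lra|].
  exact (Heps (mkposreal d Hd)).
Qed.

Lemma w1_bounded : exists C T, T <= T0 /\ forall t, t <= T -> Rabs (w1 t) <= C.
Proof.
  pose proof b_pos as Hb. pose proof M_pos as HM. pose proof (Rpower_pos M p) as HMp.
  destruct (Rbar_locally_minfty_le _ (eps_eventually_le 1 Rlt_0_1)) as [T1 HT1].
  set (H := b * M + k * Rpower M p + 1).
  set (T := Rmin T0 T1).
  assert (HT : T <= T0 /\ T <= T1) by (split; [apply Rmin_l | apply Rmin_r]).
  exists (H / a), T. split; [lra|].
  apply (derive_bounded_of_damped w w1 w2 a H M T Ha); [unfold H; nra | | | |];
    intros t Ht; [apply Hw1 | apply Hw2 | | ]; try lra.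
  - destruct (Hw t ltac:(lra)). rewrite Rabs_right; lra.
  - rewrite (Hode t ltac:(lra)).
    replace (- a * w1 t - dV (w t) + eps t + a * w1 t) with (- dV (w t) + eps t) by ring.
    eapply Rle_trans; [apply Rabs_triang|]. rewrite Rabs_Ropp.
    pose proof (Rabs_dpot_le b k p ltac:(lra) ltac:(lra) ltac:(lra) M (w t) (Hw t ltac:(lra))).
    pose proof (HT1 t ltac:(lra)). unfold H. lra.
Qed.

Lemma F_bounded : exists C T, T <= T0 /\ forall t, t <= T -> Rabs (F t) <= C.
Proof.
  pose proof b_pos. pose proof beta_pos. pose proof beta_le_1.
  destruct w1_bounded as [C [T [HT HC]]].
  exists (C ^ 2 / 2 + (b * M ^ 2 + k * Rpower M (p + 1)) + C * (b * M + k * Rpower M p)), T.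
  split; [exact HT|]. intros t Ht. unfold F, lyap.
  specialize (HC t Ht). pose proof (Rabs_pos (w1 t)).
  pose proof (Rabs_pot_le b k p ltac:(lra) ltac:(lra) ltac:(lra) M (w t) (Hw t ltac:(lra))).
  pose proof (Rabs_dpot_le b k p ltac:(lra) ltac:(lra) ltac:(lra) M (w t) (Hw t ltac:(lra))).
  pose proof (Rabs_pos (dV (w t))).
  assert (Rabs (w1 t ^ 2 / 2) <= C ^ 2 / 2).
  { rewrite Rabs_right by (apply Rle_ge, Rmult_le_pos; [apply pow2_ge_0 | lra]).
    rewrite <- (pow2_abs (w1 t)). simpl. rewrite !Rmult_1_r.
    apply Rmult_le_compat_r; [lra | apply Rmult_le_compat; lra]. }
  assert (Rabs (beta * w1 t * dV (w t)) <= C * (b * M + k * Rpower M p)).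
  { rewrite !Rabs_mult, (Rabs_right beta) by lra.
    assert (Rabs (w1 t) * Rabs (dV (w t)) <= C * (b * M + k * Rpower M p))
      by (apply Rmult_le_compat; lra).
    assert (0 <= Rabs (w1 t) * Rabs (dV (w t))) by (apply Rmult_le_pos; lra).
    nra. }
  pose proof (Rabs_triang (w1 t ^ 2 / 2 + V (w t)) (beta * w1 t * dV (w t))).
  pose proof (Rabs_triang (w1 t ^ 2 / 2) (V (w t))). lra.
Qed.

Lemma dF_le_eventually S0 : 0 < S0 -> Rbar_locally m_infty (fun t =>
  S0 <= Rabs (w1 t) + Rabs (dV (w t)) ->
  dF t <= - (beta / 8) * S0 * (Rabs (w1 t) + Rabs (dV (w t)))).
Proof.
  intros HS0. pose proof beta_pos.
  apply (filter_imp (fun t => t <= T0 /\ Rabs (eps t) <= beta * S0 / 8));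
    [| apply filter_and; [apply Rbar_locally_minfty_le_const | apply eps_eventually_le; nra]].
  intros t [Ht He] HS. eapply Rle_trans; [apply (dF_le t Ht)|].
  apply quadratic_absorbs_linear; assumption.
Qed.

Lemma F_cauchy : cauchy_minfty F.
Proof.
  pose proof beta_pos. pose proof beta_le_1.
  destruct F_bounded as [C [T [HT HC]]].
  apply (cauchy_minfty_of_derive_neg F dF T C (V gam) V_gam_neg);
    [intros t Ht; apply is_derive_F; lra | exact HC |].
  intros eta Heta.
  destruct (lyap_near_wells beta ltac:(lra) eta Heta) as [S0 [HS0 Hnear]].
  exists (beta / 8 * S0 * S0). split; [apply Rmult_lt_0_compat; [apply Rmult_lt_0_compat|]; lra|].
  apply (filter_imp (fun t => t <= T0 /\ (S0 <= Rabs (w1 t) + Rabs (dV (w t)) ->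
           dF t <= - (beta / 8) * S0 * (Rabs (w1 t) + Rabs (dV (w t))))));
    [| apply filter_and; [apply Rbar_locally_minfty_le_const | exact (dF_le_eventually S0 HS0)]].
  intros t [Ht Hdec] HF0 HFZ.
  assert (HS : S0 <= Rabs (w1 t) + Rabs (dV (w t))).
  { apply Rnot_lt_le. intros Hlt.
    destruct (Hnear (w1 t) (w t) (proj1 (Hw t Ht)) Hlt); unfold F in HF0, HFZ; lra. }
  specialize (Hdec HS).
  assert (0 <= beta / 8 * S0 * (Rabs (w1 t) + Rabs (dV (w t)) - S0))
    by (apply Rmult_le_pos; [apply Rmult_le_pos|]; lra).
  lra.
Qed.

Lemma dF_le_on_band l u : 0 < l <= u -> u < gam \/ gam < l ->
  exists c, 0 < c /\ Rbar_locally m_infty (fun t =>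
    l <= w t <= u -> dF t <= - c * (Rabs (w1 t) + 1)).
Proof.
  intros Hlu Hgl. pose proof beta_pos.
  assert (Hm : exists m, 0 < m /\ forall x, l <= x <= u -> m <= Rabs (dV x)).
  { destruct Hgl as [Hu | Hl].
    - destruct (dV_neg_below l u Hlu Hu) as [m [Hm Hx]]. exists m. split; [exact Hm|].
      intros x Hxlu. specialize (Hx x Hxlu). pose proof (Rle_abs (- dV x)).
      rewrite Rabs_Ropp in *. lra.
    - destruct (dV_pos_above l Hl) as [m [Hm Hx]]. exists m. split; [exact Hm|].
      intros x Hxlu. specialize (Hx x ltac:(lra)). pose proof (Rle_abs (dV x)). lra. }
  destruct Hm as [m [Hm Hmx]].
  destruct (Rmin_pos_le 1 m) as (Hq0 & Hq1 & Hq2); [lra | exact Hm |].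
  set (q := Rmin 1 m) in *.
  exists (beta / 8 * m * q). split; [apply Rmult_lt_0_compat; [apply Rmult_lt_0_compat|]; lra|].
  refine (filter_imp _ _ _ (dF_le_eventually m Hm)). intros t Hdec Hwt.
  specialize (Hmx (w t) Hwt). pose proof (Rabs_pos (w1 t)).
  specialize (Hdec ltac:(lra)).
  assert (q * Rabs (w1 t) <= Rabs (w1 t)) by nra.
  assert (0 <= beta / 8 * m * ((Rabs (w1 t) - q * Rabs (w1 t)) + (Rabs (dV (w t)) - q)))
    by (apply Rmult_le_pos; [apply Rmult_le_pos|]; lra).
  lra.
Qed.

Lemma w_one_side_of_band l u : 0 < l < u -> u < gam \/ gam < l ->
  Rbar_locally m_infty (fun t => l < w t) \/ Rbar_locally m_infty (fun t => w t < u).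
Proof.
  intros Hlu Hgl.
  destruct (dF_le_on_band l u ltac:(lra) Hgl) as [c [Hc Hev]].
  apply (eventually_one_side_of_band F dF w w1 T0 c l u Hc ltac:(lra)); [| | exact F_cauchy].
  - intros t Ht. split; [apply is_derive_F | apply Hw1]; exact Ht.
  - refine (filter_imp _ _ _ Hev). intros t Hdec Hwt.
    specialize (Hdec Hwt). pose proof (Rabs_pos (w1 t)). lra.
Qed.

Lemma w_not_eventually_in_band l u : 0 < l <= u -> u < gam \/ gam < l ->
  ~ Rbar_locally m_infty (fun t => l <= w t <= u).
Proof.
  intros Hlu Hgl Hin.
  destruct (dF_le_on_band l u Hlu Hgl) as [c [Hc Hev]].
  destruct F_bounded as [C [T [HT HC]]].
  destruct (Rbar_locally_minfty_le _ (filter_and _ _ Hin Hev)) as [T1 HT1].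
  set (T2 := Rmin T T1).
  assert (HT2 : T2 <= T /\ T2 <= T1) by (split; [apply Rmin_l | apply Rmin_r]).
  apply (derive_le_neg_not_bounded F dF T2 c C Hc); intros t Ht.
  - apply is_derive_F. lra.
  - destruct (HT1 t ltac:(lra)) as [Hb Hdec]. specialize (Hdec Hb).
    pose proof (Rabs_pos (w1 t)). nra.
  - apply HC. lra.
Qed.

Lemma w_eventually_pos : exists s, 0 < s /\ Rbar_locally m_infty (fun t => s < w t).
Proof.
  destruct Hfreq as [lam [Hlam Hnot]].
  destruct (Rmin_pos_le lam (gam / 2)) as (Hl0 & Hl1 & Hl2); [lra | lra |].
  set (l := Rmin lam (gam / 2)) in *.
  exists (l / 2). split; [lra|].
  destruct (w_one_side_of_band (l / 2) l) as [Habove | Hbelow]; [lra | left; lra | exact Habove |].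
  exfalso. apply Hnot. refine (filter_imp _ _ _ Hbelow). intros t Ht. lra.
Qed.

Lemma w_eventually_lt s : 0 < s -> Rbar_locally m_infty (fun t => w t < gam + s).
Proof.
  intros Hs.
  destruct (w_one_side_of_band (gam + s / 2) (gam + s)) as [Habove | Hbelow];
    [lra | right; lra | | exact Hbelow].
  exfalso.
  pose proof (Rmax_l M (gam + s / 2)). pose proof (Rmax_r M (gam + s / 2)).
  apply (w_not_eventually_in_band (gam + s / 2) (Rmax M (gam + s / 2))); [lra | right; lra |].
  refine (filter_imp _ _ _ (filter_and _ _ (Rbar_locally_minfty_le_const T0) Habove)).
  intros t [Ht Hwt].
  destruct (Hw t Ht). lra.
Qed.

Lemma w_eventually_gt s : 0 < s -> Rbar_locally m_infty (fun t => gam - s < w t).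
Proof.
  intros Hs.
  destruct (Rmin_pos_le s (gam / 2)) as (Hs0 & Hs1 & Hs2); [lra | lra |].
  set (s' := Rmin s (gam / 2)) in *.
  destruct (w_one_side_of_band (gam - s') (gam - s' / 2)) as [Habove | Hbelow];
    [lra | left; lra | |].
  - refine (filter_imp _ _ _ Habove). intros t Ht. lra.
  - exfalso. destruct w_eventually_pos as [l [Hl Hpos]].
    destruct (Rmin_pos_le l (gam / 4)) as (Hl0 & Hl1 & Hl2); [lra | lra |].
    apply (w_not_eventually_in_band (Rmin l (gam / 4)) (gam - s' / 2)); [lra | left; lra |].
    refine (filter_imp _ _ _ (filter_and _ _ Hpos Hbelow)). intros t Ht. lra.
Qed.

Theorem is_lim_minfty_equilibrium : is_lim w m_infty gam.
Proof.
  apply is_lim_spec. intros e.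
  change (Rbar_locally m_infty (fun t => Rabs (w t - gam) < e)).
  refine (filter_imp _ _ _ (filter_and _ _ (w_eventually_lt e (cond_pos e))
                                          (w_eventually_gt e (cond_pos e)))).
  intros t Ht. apply Rabs_def1; lra.
Qed.

End Convergence.

(** * The Emden-Fowler equation *)

Lemma is_lim_minfty_0_le (f g : R -> R) C :
  Rbar_locally m_infty (fun t => Rabs (f t) <= C * Rabs (g t)) ->
  is_lim g m_infty 0 -> is_lim f m_infty 0.
Proof.
  intros Hfg Hg. apply is_lim_spec in Hg. apply is_lim_spec. intros e.
  assert (HC : 0 < e / (Rabs C + 1))
    by (apply Rdiv_lt_0_compat; [apply cond_pos | pose proof (Rabs_pos C); lra]).
  change (Rbar_locally m_infty (fun t => Rabs (f t - 0) < e)).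
  refine (filter_imp _ _ _ (filter_and _ _ Hfg (Hg (mkposreal _ HC)))).
  intros t [Hf Hgt]. simpl in Hgt. rewrite Rminus_0_r in *.
  pose proof (Rabs_pos (g t)). pose proof (Rle_abs C). pose proof (Rabs_pos C).
  assert (Rabs C * Rabs (g t) <= Rabs C * (e / (Rabs C + 1))) by (apply Rmult_le_compat_l; lra).
  assert (Rabs C * (e / (Rabs C + 1)) < e).
  { apply Rmult_lt_reg_r with (Rabs C + 1); [lra|].
    replace (Rabs C * (e / (Rabs C + 1)) * (Rabs C + 1)) with (Rabs C * e) by (field; lra).
    pose proof (cond_pos e). nra. }
  nra.
Qed.

Lemma is_lim_exp_scal_minfty c : 0 < c -> is_lim (fun t => exp (c * t)) m_infty 0.
Proof.
  intros Hc. apply is_lim_spec. intros e.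
  exists (ln e / c). intros t Ht.
  rewrite Rminus_0_r, Rabs_right by (left; apply exp_pos).
  rewrite <- (exp_ln e (cond_pos e)). apply exp_increasing.
  apply Rmult_lt_compat_l with (r := c) in Ht; [|exact Hc].
  replace (c * (ln e / c)) with (ln e) in Ht by (field; lra). exact Ht.
Qed.

Lemma Lfun_eq K alpha t : Lfun K alpha t = K (exp t) / Rpower (exp t) alpha.
Proof.
  unfold Lfun, Rpower, Rdiv. rewrite ln_exp, <- exp_Ropp, Rmult_comm.
  f_equal. f_equal. ring.
Qed.

Lemma is_lim_Lfun K alpha k0 :
  filterlim (fun r => K r / Rpower r alpha) (at_right 0) (locally k0) ->
  is_lim (Lfun K alpha) m_infty k0.
Proof.
  intros HK.
  apply (is_lim_ext (fun t => K (exp t) / Rpower (exp t) alpha));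
    [intros t; symmetry; apply Lfun_eq|].
  apply (filterlim_comp R R R exp (fun r => K r / Rpower r alpha) _ (at_right 0)); [| exact HK].
  intros P [d Hd]. exists (ln d). intros t Ht. apply Hd; [| apply exp_pos].
  change (Rabs (exp t - 0) < d). rewrite Rminus_0_r, Rabs_right by (left; apply exp_pos).
  rewrite <- (exp_ln d (cond_pos d)). apply exp_increasing. exact Ht.
Qed.

Lemma is_lim_gfun f alpha p nu : 1 < p -> -2 < alpha -> -2 < nu ->
  (exists C delta, 0 < delta /\ forall r, 0 < r < delta -> Rabs (f r) <= C * Rpower r nu) ->
  is_lim (gfun f alpha p) m_infty 0.
Proof.
  intros Hp Halpha Hnu [C [delta [Hdelta HfO]]].
  set (c := 2 + theta alpha p + nu).
  assert (Hc : 0 < c).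
  { enough (0 < theta alpha p) by (unfold c; lra).
    apply Rdiv_lt_0_compat; lra. }
  apply (is_lim_minfty_0_le _ (fun t => exp (c * t)) C); [| exact (is_lim_exp_scal_minfty c Hc)].
  exists (ln delta). intros t Ht.
  assert (Hexp : 0 < exp t < delta).
  { split; [apply exp_pos|]. rewrite <- (exp_ln delta Hdelta). apply exp_increasing, Ht. }
  specialize (HfO (exp t) Hexp). unfold Rpower in HfO. rewrite ln_exp in HfO.
  unfold gfun. rewrite Rabs_mult, (Rabs_right (exp _)), (Rabs_right (exp (c * t)))
    by (left; apply exp_pos).
  replace (exp (c * t)) with (exp ((2 + theta alpha p) * t) * exp (nu * t))
    by (rewrite <- exp_plus; f_equal; unfold c; ring).
  pose proof (exp_pos ((2 + theta alpha p) * t)).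
  nra.
Qed.

Lemma is_lim_perturbation K f (w : R -> R) alpha k0 nu p mu M T : 1 < p -> -2 < alpha -> -2 < nu ->
  filterlim (fun r => K r / Rpower r alpha) (at_right 0) (locally k0) ->
  (exists C delta, 0 < delta /\ forall r, 0 < r < delta -> Rabs (f r) <= C * Rpower r nu) ->
  (forall t, t <= T -> 0 < w t <= M) ->
  is_lim (fun t => (k0 - Lfun K alpha t) * Rpower (w t) p - mu * gfun f alpha p t) m_infty 0.
Proof.
  intros Hp Halpha Hnu HK HfO Hw.
  replace (Finite 0) with (Finite (0 - 0)) by (f_equal; ring).
  apply is_lim_minus'.
  - apply (is_lim_minfty_0_le _ (fun t => k0 - Lfun K alpha t) (Rpower M p)).
    + exists T. intros t Ht. destruct (Hw t ltac:(lra)) as [Hw0 HwM].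
      rewrite Rabs_mult, (Rabs_right (Rpower _ _)) by (left; apply Rpower_pos).
      assert (Rpower (w t) p <= Rpower M p) by (apply Rle_Rpower_l; lra).
      pose proof (Rabs_pos (k0 - Lfun K alpha t)). nra.
    + replace (Finite 0) with (Finite (k0 - k0)) by (f_equal; ring).
      apply is_lim_minus'; [apply is_lim_const | apply is_lim_Lfun, HK].
  - apply (is_lim_minfty_0_le _ (gfun f alpha p) (Rabs mu));
      [| apply (is_lim_gfun f alpha p nu); assumption].
    exists 0. intros t _. rewrite Rabs_mult. lra.
Qed.

Lemma Lub_Rbar_below_finite (w : R -> R) t1 T : Rbar_lt 0 (limsup_minfty w t1) -> T < t1 ->
  exists u, Lub_Rbar (fun z => exists t, t < T /\ z = w t) = Finite u /\
    (forall t, t < T -> w t <= u) /\ Rbar_le (limsup_minfty w t1) u.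
Proof.
  intros Hpos HT. unfold limsup_minfty in *.
  set (E := fun y : R =>
    exists T, T < t1 /\ y = Lub_Rbar (fun z => exists t, t < T /\ z = w t)) in *.
  destruct (Glb_Rbar_correct E) as [Hlb _].
  destruct (Lub_Rbar_correct (fun z => exists t, t < T /\ z = w t)) as [Hub _].
  destruct (Lub_Rbar (fun z => exists t, t < T /\ z = w t)) as [u | |] eqn:Hu.
  - exists u. split; [reflexivity|]. split.
    + intros t Ht. exact (Hub (w t) (ex_intro _ t (conj Ht eq_refl))).
    + apply Hlb. exists T. split; [exact HT | rewrite Hu; reflexivity].
  - (* [real p_infty = 0], so an unbounded supremum puts [0] into [E]. *)
    exfalso. assert (HE0 : E 0) by (exists T; split; [exact HT | rewrite Hu; reflexivity]).
    specialize (Hlb 0 HE0). destruct (Glb_Rbar E); simpl in *; try lra; contradiction.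
  - exfalso. assert (HT1 : T - 1 < T) by lra.
    exact (Hub (w (T - 1)) (ex_intro _ (T - 1) (conj HT1 eq_refl))).
Qed.

Lemma limsup_minfty_bounded (w : R -> R) t1 : Rbar_lt 0 (limsup_minfty w t1) ->
  exists T M, T < t1 /\ forall t, t < T -> w t <= M.
Proof.
  intros Hpos.
  destruct (Lub_Rbar_below_finite w t1 (t1 - 1) Hpos ltac:(lra)) as [u [_ [Hu _]]].
  exists (t1 - 1), u. split; [lra | exact Hu].
Qed.

Lemma limsup_minfty_frequently (w : R -> R) t1 : Rbar_lt 0 (limsup_minfty w t1) ->
  Rbar_lt (limsup_minfty w t1) p_infty ->
  exists lam, 0 < lam /\ ~ Rbar_locally m_infty (fun t => w t <= lam).
Proof.
  intros Hpos Hfin.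
  destruct (limsup_minfty w t1) as [l0 | |] eqn:Hl; simpl in Hpos, Hfin; try contradiction.
  exists (l0 / 2). split; [lra|]. intros [T HT].
  set (T' := Rmin T (t1 - 1)).
  assert (HT' : T' <= T /\ T' <= t1 - 1) by (split; [apply Rmin_l | apply Rmin_r]).
  destruct (Lub_Rbar_below_finite w t1 T') as [u [Hu [_ Hle]]]; [rewrite Hl; simpl; lra | lra |].
  rewrite Hl in Hle. simpl in Hle.
  destruct (Lub_Rbar_correct (fun z => exists t, t < T' /\ z = w t)) as [_ Hlub].
  assert (Hub : is_ub_Rbar (fun z => exists t, t < T' /\ z = w t) (l0 / 2)).
  { intros z [t [Ht ->]]. simpl. apply HT. lra. }
  specialize (Hlub _ Hub). rewrite Hu in Hlub. simpl in Hlub. lra.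
Qed.

Lemma supercritical_exponent N alpha p : (3 <= N)%nat -> -2 < alpha -> pS N alpha < p ->
  1 < p /\ 0 < acoef N alpha p.
Proof.
  intros HN Halpha Hp.
  assert (HN3 : 3 <= INR N) by (replace 3 with (INR 3) by (simpl; ring); apply le_INR, HN).
  assert (HpN : INR N + 2 + 2 * alpha < p * (INR N - 2)).
  { unfold pS in Hp. apply Rmult_lt_compat_r with (r := INR N - 2) in Hp; [|lra].
    unfold Rdiv in Hp. rewrite Rmult_assoc, Rinv_l in Hp by lra. lra. }
  assert (Hp1 : 1 < p) by nra.
  split; [exact Hp1|].
  unfold acoef, theta.
  apply Rmult_lt_reg_r with (p - 1); [lra|].
  replace ((INR N - 2 - 2 * ((2 + alpha) / (p - 1))) * (p - 1))
    with ((INR N - 2) * (p - 1) - 2 * (2 + alpha)) by (field; lra).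
  nra.
Qed.

Lemma gammacoef_spec N alpha p k0 : 1 < p -> 0 < k0 ->
  0 < gammacoef N alpha p k0 /\
  k0 * Rpower (gammacoef N alpha p k0) (p - 1) = Rpower (Acoef N alpha p) (p - 1).
Proof.
  intros Hp Hk0. unfold gammacoef.
  split; [apply Rmult_lt_0_compat; apply Rpower_pos|].
  rewrite <- Rpower_mult_distr, Rpower_mult by apply Rpower_pos.
  replace (- (1 / (p - 1)) * (p - 1)) with (- (1)) by (field; lra).
  rewrite Rpower_Ropp, Rpower_1 by exact Hk0. field. lra.
Qed.

Theorem lemma2p2
  (N : nat) (mu : R) (K f : R -> R) (alpha k0 nu p t1 : R) (w : R -> R)
  (HN : (3 <= N)%nat)
  (Hmu : 0 <= mu)
  (* (K0) *)
  (HKpos : forall r, 0 < r -> 0 < K r)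
  (HKcont : forall r, 0 < r -> continuous K r)
  (Halpha : -2 < alpha) (Hk0 : 0 < k0)
  (HKlim : filterlim (fun r => K r / Rpower r alpha) (at_right 0) (locally k0))
  (* (F0) *)
  (Hfnn : forall r, 0 < r -> 0 <= f r)
  (Hfcont : forall r, 0 < r -> continuous f r)
  (Hfnz : exists r, 0 < r /\ f r <> 0)
  (Hnu : -2 < nu)
  (HfO : exists C delta, 0 < delta /\
           forall r, 0 < r < delta -> Rabs (f r) <= C * Rpower r nu)
  (* supercritical exponent *)
  (Hp : pS N alpha < p)
  (* w in C^2(-oo, t1), positive solution *)
  (Hw1 : forall t, t < t1 -> ex_derive w t)
  (Hw2 : forall t, t < t1 -> ex_derive (Derive w) t)
  (Hw2c : forall t, t < t1 -> continuous (Derive (Derive w)) t)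
  (Hwpos : forall t, t < t1 -> 0 < w t)
  (Heq : forall t, t < t1 ->
      Derive (Derive w) t + acoef N alpha p * Derive w t
      - Rpower (Acoef N alpha p) (p - 1) * w t
      + Lfun K alpha t * Rpower (w t) p + mu * gfun f alpha p t = 0)
  (Hlimsup : Rbar_lt (Finite 0) (limsup_minfty w t1) /\
             Rbar_lt (limsup_minfty w t1) p_infty) :
  is_lim w m_infty (gammacoef N alpha p k0).
Proof.
  destruct Hlimsup as [Hpos Hfin].
  destruct (supercritical_exponent N alpha p HN Halpha Hp) as [Hp1 Ha].
  destruct (gammacoef_spec N alpha p k0 Hp1 Hk0) as [Hgam Hgam_eq].
  destruct (limsup_minfty_bounded w t1 Hpos) as (T & M & HT & HM).
  assert (Hw : forall t, t <= T - 1 -> 0 < w t <= M)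
    by (intros t Ht; split; [apply Hwpos | apply HM]; lra).
  apply (is_lim_minfty_equilibrium (acoef N alpha p) (Rpower (Acoef N alpha p) (p - 1)) k0 p
           _ M (T - 1) w (Derive w) (Derive (Derive w))
           (fun t => (k0 - Lfun K alpha t) * Rpower (w t) p - mu * gfun f alpha p t)
           Ha Hk0 Hp1 Hgam Hgam_eq Hw).
  - intros t Ht. apply Derive_correct, Hw1. lra.
  - intros t Ht. apply Derive_correct, Hw2. lra.
  - intros t Ht. specialize (Heq t ltac:(lra)). unfold dpot. lra.
  - apply (is_lim_perturbation K f w alpha k0 nu p mu M (T - 1)); assumption.
  - apply (limsup_minfty_frequently w t1 Hpos Hfin).
Qed.
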